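(* Let $C>0$ be a constant such that for all real numbers $\{c_{ij}:1\le i,j\le 4\}$ one has $\min_{S\in\{-1,1\}^8}\sum_{1\le i,j\le 4}c_{ij}S_{u_i}S_{v_j}\le -C\sum_{1\le i,j\le 4}|c_{ij}|$ (such a constant exists, e.g. some $C>\ln(1+\sqrt2)/\pi$). Let $r$ be a positive integer, let $G_r=(V,E)$ be the Chimera graph with $E=E_0\cup E_1\cup E_{01}$, and let $c_{uv}\in\mathbb{R}$ for $(u,v)\in E$ and $d_u\in\mathbb{R}$ for $u\in V$ be arbitrary. Let $H^*=\min_{S\in\{-1,1\}^V}\left(\sum_{(u,v)\in E}c_{uv}S_uS_v+\sum_{u\in V}d_uS_u\right)$, $A_0=\sum_{(u,v)\in E_0}|c_{uv}|$, $A_1=\sum_{(u,v)\in E_1}|c_{uv}|$, and $A_{01}=\sum_{(u,v)\in E_{01}}|c_{uv}|$. Then $H^*\le A_0+A_1-CA_{01}$.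
   Context: The Chimera graph $G_r=(V,E)$: $V=\{(i,j,k,l)\in\mathbb{Z}^4: 1\le i,j\le r,\ 1\le k\le 4,\ l\in\{0,1\}\}$. $E=E_0\cup E_1\cup E_{01}$ (disjoint), where $E_0$ consists of the edges $\{(i,j,k,0),(i+1,j,k,0)\}$ for $1\le i\le r-1$, $1\le j\le r$, $1\le k\le 4$; $E_1$ consists of the edges $\{(i,j,k,1),(i,j+1,k,1)\}$ for $1\le i\le r$, $1\le j\le r-1$, $1\le k\le 4$; and $E_{01}$ consists of the edges $\{(i,j,k_0,0),(i,j,k_1,1)\}$ for $1\le i,j\le r$, $1\le k_0,k_1\le 4$. In the hypothesis on $C$, $u_1,\dots,u_4$ and $v_1,\dots,v_4$ denote the two sides of $K_{4,4}$. *)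

From HB Require Import structures.
From mathcomp Require Import all_boot all_order all_algebra.
Set Implicit Arguments. Unset Strict Implicit. Unset Printing Implicit Defensive.
Import Order.TTheory GRing.Theory Num.Theory.
Local Open Scope ring_scope.

Definition spin {R : pzRingType} (b : bool) : R := if b then 1 else -1.

Definition fmin {R : realDomainType} (T : finType) (x0 : T) (f : T -> R) : R :=
  \big[Num.min/f x0]_(x : T) f x.

(* Chimera graph G_r: vertex (i,j,k,l) with 0-based i,j < r, k < 4, l = false (0) / true (1). *)
Definition chim_vert (r : nat) : finType := ('I_r * 'I_r * 'I_4 * bool)%type.

Definition cv_i r (u : chim_vert r) : nat := u.1.1.1.
Definition cv_j r (u : chim_vert r) : nat := u.1.1.2.
Definition cv_k r (u : chim_vert r) : 'I_4 := u.1.2.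
Definition cv_l r (u : chim_vert r) : bool := u.2.

(* Each undirected edge is listed exactly once as an oriented pair (u,v). *)
Definition E0 r (u v : chim_vert r) : bool :=
  [&& ~~ cv_l u, ~~ cv_l v, cv_i v == (cv_i u).+1, cv_j v == cv_j u & cv_k v == cv_k u].
Definition E1 r (u v : chim_vert r) : bool :=
  [&& cv_l u, cv_l v, cv_i v == cv_i u, cv_j v == (cv_j u).+1 & cv_k v == cv_k u].
Definition E01 r (u v : chim_vert r) : bool :=
  [&& ~~ cv_l u, cv_l v, cv_i v == cv_i u & cv_j v == cv_j u].
Definition Echim r (u v : chim_vert r) : bool := [|| E0 u v, E1 u v | E01 u v].

Definition chim_H {R : realDomainType} r (c : chim_vert r -> chim_vert r -> R)
  (d : chim_vert r -> R) (S : {ffun chim_vert r -> bool}) : R :=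
  \sum_(u : chim_vert r) \sum_(v : chim_vert r | Echim u v) c u v * spin (S u) * spin (S v)
  + \sum_(u : chim_vert r) d u * spin (S u).

Definition abs_sum {R : realDomainType} r (E : rel (chim_vert r))
  (c : chim_vert r -> chim_vert r -> R) : R :=
  \sum_(u : chim_vert r) \sum_(v : chim_vert r | E u v) `|c u v|.

(* K_{4,4} energy: sides u_1..u_4 = inl, v_1..v_4 = inr. *)
Definition k44_H {R : realDomainType} (c : 'I_4 -> 'I_4 -> R)
  (S : {ffun ('I_4 + 'I_4)%type -> bool}) : R :=
  \sum_(i < 4) \sum_(j < 4) c i j * spin (S (inl i)) * spin (S (inr j)).

From HB Require Import structures.
From mathcomp Require Import all_boot all_order all_algebra.
Set Implicit Arguments. Unset Strict Implicit. Unset Printing Implicit Defensive.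
Import Order.TTheory GRing.Theory Num.Theory.
Local Open Scope ring_scope.

(* The energy splits into a quadratic part, invariant under flipping all spins,
   and a linear part, which changes sign; so the better of a configuration and
   its flip has energy at most the quadratic part alone.  The couplings of E01
   form r^2 disjoint copies of K_{4,4}, one per cell; choosing in each cell a
   configuration given by the hypothesis on C and gluing them makes the E01
   part at most -C A01, while the E0 and E1 parts are trivially at most A0 and
   A1. *)

Section Fmin.
Variables (R : realDomainType) (T : finType) (x0 : T) (f : T -> R).

Lemma fmin_le x : fmin x0 f <= f x.
Proof. by rewrite /fmin (bigD1 x) //= ge_min lexx. Qed.

Lemma fmin_attained : exists x, fmin x0 f = f x.
Proof.
rewrite /fmin; apply: (big_ind (fun y => exists x, y = f x)); first by exists x0.
- by move=> _ _ [x ->] [y ->]; rewrite minElt; case: ifP => _; [exists x|exists y].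
- by move=> x _; exists x.
Qed.

Lemma fmin_le_add x y : fmin x0 f *+ 2 <= f x + f y.
Proof. by rewrite mulr2n lerD ?fmin_le. Qed.

End Fmin.

Lemma normr_spin (R : numDomainType) (b : bool) : `|spin b : R| = 1.
Proof. by case: b; rewrite /spin ?normrN normr1. Qed.

Lemma spin_negb (R : pzRingType) (b : bool) : spin (~~ b) = - spin b :> R.
Proof. by case: b; rewrite /spin ?opprK. Qed.

Section Chimera.
Variables (R : realFieldType) (r : nat).
Implicit Types (S : {ffun chim_vert r -> bool}) (E : rel (chim_vert r)).

Lemma sum_chim_vert (F : chim_vert r -> R) :
  \sum_u F u = \sum_(y : 'I_r * 'I_r) \sum_(k < 4) \sum_(l : bool) F (y, k, l).
Proof.
rewrite (pair_big _ _ (fun y k => \sum_(l : bool) F (y, k, l))) /=.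
rewrite (pair_big _ _ (fun p l => F (p.1, p.2, l))) /=.
by apply: eq_bigr => -[[y k] l].
Qed.

Lemma E01_cellE (y y' : 'I_r * 'I_r) (a b : 'I_4) (l l' : bool) :
  E01 (y, a, l) (y', b, l') = [&& ~~ l, l' & y' == y].
Proof. by rewrite /E01 /cv_i /cv_j /cv_l /=; case: l; case: l'. Qed.

Lemma sum_E01_row (y : 'I_r * 'I_r) (a : 'I_4) (F : chim_vert r -> R) :
  \sum_(v | E01 (y, a, false) v) F v = \sum_(b < 4) F (y, b, true).
Proof.
rewrite big_mkcond sum_chim_vert exchange_big; apply: eq_bigr => b _ /=.
rewrite (eq_bigr (fun y' => if y' == y then F (y', b, true) else 0)); last first.
  by move=> y' _; rewrite big_bool !E01_cellE /= addr0.
by rewrite -big_mkcond big_pred1_eq.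
Qed.

Lemma sum_E01 (G : chim_vert r -> chim_vert r -> R) :
  \sum_u \sum_(v | E01 u v) G u v =
  \sum_(y : 'I_r * 'I_r) \sum_(a < 4) \sum_(b < 4) G (y, a, false) (y, b, true).
Proof.
rewrite sum_chim_vert; apply: eq_bigr => y _; apply: eq_bigr => a _.
rewrite big_bool big_pred0 => [|v]; last by case: v => -[y' b] l; rewrite E01_cellE.
by rewrite /= add0r sum_E01_row.
Qed.

Variables (c : chim_vert r -> chim_vert r -> R) (d : chim_vert r -> R).

Definition edge_energy E S : R :=
  \sum_u \sum_(v | E u v) c u v * spin (S u) * spin (S v).

Definition field_energy S : R := \sum_u d u * spin (S u).

Definition flip S : {ffun chim_vert r -> bool} := [ffun u => ~~ S u].

Lemma chim_HE S : chim_H c d S = edge_energy (@Echim r) S + field_energy S.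
Proof. by []. Qed.

Lemma edge_energy_flip E S : edge_energy E (flip S) = edge_energy E S.
Proof.
apply: eq_bigr => u _; apply: eq_bigr => v _.
by rewrite !ffunE !spin_negb -mulrA mulrNN mulrA.
Qed.

Lemma field_energy_flip S : field_energy (flip S) = - field_energy S.
Proof. by rewrite -sumrN; apply: eq_bigr => u _; rewrite ffunE spin_negb mulrN. Qed.

Lemma fmin_chim_H_le_edge_energy S :
  fmin [ffun=> true] (chim_H c d) <= edge_energy (@Echim r) S.
Proof.
suff: fmin [ffun=> true] (chim_H c d) *+ 2 <= edge_energy (@Echim r) S *+ 2.
  by rewrite lerMn2r.
apply: le_trans (fmin_le_add _ _ S (flip S)) _.
by rewrite !chim_HE edge_energy_flip field_energy_flip addrACA subrr addr0 mulr2n.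
Qed.

Lemma edge_energy_Echim S :
  edge_energy (@Echim r) S =
  edge_energy (@E0 r) S + edge_energy (@E1 r) S + edge_energy (@E01 r) S.
Proof.
rewrite -!big_split; apply: eq_bigr => u _ /=.
rewrite (big_mkcond (Echim u)) (big_mkcond (E0 u)) (big_mkcond (E1 u)) (big_mkcond (E01 u)).
rewrite -!big_split; apply: eq_bigr => v _ /=.
by rewrite /Echim /E0 /E1 /E01; case: (cv_l u); case: (cv_l v); rewrite /= ?orbF ?add0r ?addr0.
Qed.

Lemma edge_energy_le_abs_sum E S : edge_energy E S <= abs_sum E c.
Proof.
apply: ler_sum => u _; apply: ler_sum => v _.
by apply: le_trans (ler_norm _) _; rewrite !normrM !normr_spin !mulr1.
Qed.

Definition cell_coupling (y : 'I_r * 'I_r) (a b : 'I_4) : R := c (y, a, false) (y, b, true).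

(* Vertex (y, k, false) of the Chimera graph is u_k of the K_{4,4} in cell y,
   and (y, k, true) is v_k. *)
Definition glue (s : 'I_r * 'I_r -> {ffun ('I_4 + 'I_4)%type -> bool}) :
  {ffun chim_vert r -> bool} :=
  [ffun u => s u.1.1 (if u.2 then inr u.1.2 else inl u.1.2)].

Lemma edge_energy_E01_glue s :
  edge_energy (@E01 r) (glue s) = \sum_y k44_H (cell_coupling y) (s y).
Proof.
rewrite /edge_energy sum_E01; apply: eq_bigr => y _.
by apply: eq_bigr => a _; apply: eq_bigr => b _; rewrite !ffunE.
Qed.

Lemma abs_sum_E01 :
  abs_sum (@E01 r) c = \sum_y \sum_(a < 4) \sum_(b < 4) `|cell_coupling y a b|.
Proof. exact: sum_E01. Qed.

End Chimera.

Theorem lemma3 (R : realFieldType) (C : R) (HC0 : 0 < C)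
  (HC : forall c : 'I_4 -> 'I_4 -> R,
      fmin [ffun=> true] (k44_H c) <= - C * \sum_(i < 4) \sum_(j < 4) `|c i j|)
  (r : nat) (Hr : (0 < r)%N)
  (c : chim_vert r -> chim_vert r -> R) (d : chim_vert r -> R) :
  fmin [ffun=> true] (chim_H c d)
    <= abs_sum (@E0 r) c + abs_sum (@E1 r) c - C * abs_sum (@E01 r) c.
Proof.
have /fin_all_exists [s Hs] (y : 'I_r * 'I_r) :
    exists t, k44_H (cell_coupling c y) t
      <= - C * \sum_(a < 4) \sum_(b < 4) `|cell_coupling c y a b|.
  have [t Ht] := fmin_attained [ffun=> true] (k44_H (cell_coupling c y)).
  by exists t; rewrite -Ht.
apply: le_trans (fmin_chim_H_le_edge_energy c d (glue s)) _.
rewrite edge_energy_Echim !lerD ?edge_energy_le_abs_sum //.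
rewrite edge_energy_E01_glue abs_sum_E01 mulr_sumr -sumrN.
by apply: ler_sum => y _; rewrite -mulNr.
Qed.
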